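(* Fix $n\geq 3$ and let $r>0$. Then $T^{\circ r}$ is positive definite for every positive definite matrix $T$ of the form below if and only if $r\geq 1$; likewise, $T^{\circ r}$ is positive semidefinite for every positive semidefinite matrix $T$ of the form below if and only if $r\geq 1$. Here $T$ ranges over the $n\times n$ symmetric tridiagonal matrices with diagonal entries $T_{ii}=a_i\geq 0$ ($1\le i\le n$), off-diagonal entries $T_{j,j+1}=T_{j+1,j}=b_j\geq 0$ ($1\le j\le n-1$), and all other entries zero.
   Context: For a nonnegative matrix $A=[a_{ij}]$ and $r>0$, the Hadamard power is $A^{\circ r}=[a_{ij}^r]$. Positive (semi)definite matrices are required to be symmetric. *)

From HB Require Import structures.
From mathcomp Require Import all_boot all_order all_algebra.
From mathcomp Require Import all_classical all_reals.
From mathcomp Require Import exp.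
Set Implicit Arguments. Unset Strict Implicit. Unset Printing Implicit Defensive.
Import Order.TTheory GRing.Theory Num.Theory.
Local Open Scope ring_scope.

Definition qform (R : realType) (n : nat) (A : 'M[R]_n) (x : 'rV[R]_n) : R :=
  (x *m A *m x^T) 0 0.

Definition posdef (R : realType) (n : nat) (A : 'M[R]_n) : Prop :=
  A^T = A /\ forall x : 'rV[R]_n, x != 0 -> 0 < qform A x.

Definition possemidef (R : realType) (n : nat) (A : 'M[R]_n) : Prop :=
  A^T = A /\ forall x : 'rV[R]_n, 0 <= qform A x.

(* Hadamard (entrywise) real power; powR with 0 `^ r = 0 for r > 0 *)
Definition hadamard_pow (R : realType) (n : nat) (r : R) (A : 'M[R]_n) : 'M[R]_n :=
  \matrix_(i, j) (A i j `^ r).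

Definition nonneg_tridiag (R : realType) (n : nat) (T : 'M[R]_n) : Prop :=
  (forall i j : 'I_n, T i j = T j i) /\
  (forall i : 'I_n, 0 <= T i i) /\
  (forall i j : 'I_n, j = i.+1 :> nat -> 0 <= T i j) /\
  (forall i j : 'I_n, (i.+1 < j)%N \/ (j.+1 < i)%N -> T i j = 0).

From HB Require Import structures.
From mathcomp Require Import all_boot all_order all_algebra.
From mathcomp Require Import all_classical all_reals.
From mathcomp Require Import sequences exp.
From mathcomp Require Import ring lra zify.
Set Implicit Arguments. Unset Strict Implicit. Unset Printing Implicit Defensive.
Import Order.TTheory GRing.Theory Num.Theory.
Local Open Scope ring_scope.

(* For r >= 1 we induct on the size, eliminating the first variable of the quadratic form
   sum_i a_i x_i^2 + 2 sum_i b_i x_i x_(i+1) of T.  What remains is a form of the same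
   shape whose first diagonal entry is the Schur complement c = a_1 - b_0^2/a_0.  As
   a_1 = b_0^2/a_0 + c, superadditivity of t |-> t^r gives a_1^r >= (b_0^2/a_0)^r + c^r, so
   the form of the Hadamard power dominates a positive semidefinite binary form in x_0, x_1
   plus the r-th power of the Schur complement form, to which induction applies.
   For r < 1, the matrix with unit diagonal and off-diagonal entries g, g, 0, ..., 0 is
   positive definite when 2 g^2 < 1, but its r-th Hadamard power is not even positive
   semidefinite when 2 g^(2r) > 1, and such a g exists. *)

Section TridiagonalForm.
Variable R : realFieldType.
Implicit Types (a b x y : nat -> R) (m : nat).

Definition tridiag_form m a b x : R :=
  \sum_(0 <= i < m.+1) a i * x i ^+ 2 + 2 * \sum_(0 <= i < m) b i * x i * x i.+1.

Lemma tridiag_formS m a b x :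
  tridiag_form m.+1 a b x = a 0%N * x 0%N ^+ 2 + 2 * b 0%N * x 0%N * x 1%N
    + tridiag_form m (fun i => a i.+1) (fun i => b i.+1) (fun i => x i.+1).
Proof. by rewrite /tridiag_form !big_nat_recl //; ring. Qed.

Lemma eq_tridiag_form m a b x y :
  (forall i, (i <= m)%N -> x i = y i) -> tridiag_form m a b x = tridiag_form m a b y.
Proof.
move=> xy; rewrite /tridiag_form.
congr (_ + 2 * _); apply: eq_big_nat => i /andP[_ lt_im].
  by rewrite xy.
by rewrite !xy // ltnW.
Qed.

Lemma tridiag_form_head m a b x :
  (forall i, (0 < i <= m)%N -> x i = 0) -> tridiag_form m a b x = a 0%N * x 0%N ^+ 2.
Proof.
move=> x_eq0; rewrite /tridiag_form big_nat_recl //.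
rewrite [X in _ + X + _]big1_seq => [|i /andP[_]]; last first.
  by rewrite mem_index_iota => /andP[_ lt_im]; rewrite (x_eq0 i.+1) ?lt_im // expr2 !mulr0.
rewrite big1_seq => [|i /andP[_]]; last first.
  by rewrite mem_index_iota => /andP[_ lt_im]; rewrite (x_eq0 i.+1) ?lt_im // mulr0.
by rewrite mulr0 !addr0.
Qed.

Lemma tridiag_form_diag0 m a a' b x : (forall i, a' i.+1 = a i.+1) ->
  tridiag_form m a' b x = tridiag_form m a b x + (a' 0%N - a 0%N) * x 0%N ^+ 2.
Proof.
move=> aa'; rewrite /tridiag_form !big_nat_recl //.
under eq_bigr do rewrite aa'.
ring.
Qed.

Lemma tridiag_form_delta0 m a b : tridiag_form m a b (fun i => (i == 0%N)%:R) = a 0%N.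
Proof. by rewrite tridiag_form_head ?expr1n ?mulr1 // => -[]. Qed.

Definition tridiag_psd m a b := forall x, 0 <= tridiag_form m a b x.

Definition tridiag_pd m a b :=
  forall x, (exists2 i, (i <= m)%N & x i != 0) -> 0 < tridiag_form m a b x.

Lemma tridiag_psd_diag0 m a b : tridiag_psd m a b -> 0 <= a 0%N.
Proof. by move/(_ (fun i => (i == 0%N)%:R)); rewrite tridiag_form_delta0. Qed.

Lemma tridiag_pd_diag0 m a b : tridiag_pd m a b -> 0 < a 0%N.
Proof.
move/(_ (fun i => (i == 0%N)%:R)); rewrite tridiag_form_delta0; apply.
by exists 0%N; rewrite ?oner_neq0.
Qed.

Definition scons (t : R) y : nat -> R := fun i => if i is j.+1 then y j else t.

Definition schur_diag a b : nat -> R :=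
  fun i => if i is j.+1 then a j.+2 else a 1%N - b 0%N ^+ 2 / a 0%N.

(* No hypothesis on a 0: if it vanishes, both divisions by a 0 evaluate to 0. *)
Lemma tridiag_form_schur m a b y :
  tridiag_form m.+1 a b (scons (- (b 0%N * y 0%N) / a 0%N) y) =
  tridiag_form m (schur_diag a b) (fun i => b i.+1) y.
Proof.
rewrite tridiag_formS [RHS](@tridiag_form_diag0 _ (fun i => a i.+1)) //=.
have [->|a0_neq0] := eqVneq (a 0%N) 0; first by rewrite !invr0 !mulr0 !mul0r; ring.
by field.
Qed.

End TridiagonalForm.

Lemma quad_form2_ge0 (R : realFieldType) (A B D x y : R) :
  0 <= A -> 0 <= D -> B ^+ 2 <= A * D -> 0 <= A * x ^+ 2 + 2 * B * x * y + D * y ^+ 2.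
Proof.
move=> A_ge0 D_ge0 BAD.
have [A0|A_gt0] := eqVneq A 0.
  have B0 : B = 0.
    by apply/eqP; rewrite -sqrf_eq0 eq_le sqr_ge0 andbT (le_trans BAD) // A0 mul0r.
  by rewrite A0 B0 !(mul0r, mulr0, add0r) mulr_ge0 ?sqr_ge0.
have A_pos : 0 < A by rewrite lt_def A_gt0.
rewrite -(pmulr_rge0 _ A_pos).
have -> : A * (A * x ^+ 2 + 2 * B * x * y + D * y ^+ 2) =
  (A * x + B * y) ^+ 2 + (A * D - B ^+ 2) * y ^+ 2 by ring.
by rewrite addr_ge0 ?sqr_ge0 // mulr_ge0 ?sqr_ge0 ?subr_ge0.
Qed.

Section HadamardPowerStep.
Variables (R : realType) (r : R).
Hypothesis r_ge1 : 1 <= r.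

Let r_neq0 : r != 0. Proof. by rewrite gt_eqF // (lt_le_trans _ r_ge1). Qed.

Lemma powR_superadd (x y : R) : 0 <= x -> 0 <= y -> x `^ r + y `^ r <= (x + y) `^ r.
Proof.
move=> x_ge0 y_ge0; have [->|x_neq0] := eqVneq x 0.
  by rewrite powR0 ?add0r.
have s_gt0 : 0 < x + y by rewrite ltr_wpDr // lt_def x_neq0.
have frac_le (z : R) : 0 <= z -> z <= x + y -> z `^ r <= z / (x + y) * (x + y) `^ r.
  move=> z_ge0 z_le; have [->|z_neq0] := eqVneq z 0; first by rewrite powR0 ?mul0r.
  rewrite -{1}(divfK (lt0r_neq0 s_gt0) z); apply: ge1r_powRZ => //; last exact: ltW.
  by rewrite divr_gt0 ?s_gt0 ?lt_def ?z_neq0 //= ler_pdivrMr // mul1r.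
rewrite [leRHS](_ : _ = x / (x + y) * (x + y) `^ r + y / (x + y) * (x + y) `^ r).
  by apply: lerD; apply: frac_le; rewrite ?lerDl ?lerDr.
by rewrite -mulrDl -mulrDl divff ?mul1r // gt_eqF.
Qed.

Lemma tridiag_form_powR_schur m (a b x : nat -> R) :
  0 <= a 0%N -> 0 <= b 0%N -> (a 0%N = 0 -> b 0%N = 0) -> 0 <= schur_diag a b 0%N ->
  tridiag_form m (fun i => schur_diag a b i `^ r) (fun i => b i.+1 `^ r) (fun i => x i.+1)
  <= tridiag_form m.+1 (fun i => a i `^ r) (fun i => b i `^ r) x.
Proof.
move=> a0_ge0 b0_ge0 a0_b0 c_ge0; set c := schur_diag a b 0%N in c_ge0 *.
set d := b 0%N ^+ 2 / a 0%N.
have d_ge0 : 0 <= d by rewrite divr_ge0 ?sqr_ge0.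
have a1E : a 1%N = d + c by rewrite /c /d /=; ring.
have b0_sqr : b 0%N * b 0%N = a 0%N * d.
  have [a00|a0_neq0] := eqVneq (a 0%N) 0; first by rewrite a00 a0_b0 // !mul0r.
  by rewrite /d; field.
(* a 1 = d + c gives a 1 ^ r - c ^ r >= d ^ r, and (a 0 ^ r) (d ^ r) = (b 0 ^ r) ^ 2. *)
rewrite tridiag_formS (@tridiag_form_diag0 _ _ (fun i => a i.+1 `^ r)) //=.
rewrite addrC lerD2r -subr_ge0 (_ : a 1%N - _ = c) //.
have d_le : d `^ r <= a 1%N `^ r - c `^ r by rewrite lerBrDr a1E powR_superadd.
rewrite (_ : _ - _ = a 0%N `^ r * x 0%N ^+ 2 + 2 * b 0%N `^ r * x 0%N * x 1%N
                     + (a 1%N `^ r - c `^ r) * x 1%N ^+ 2); last by ring.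
apply: quad_form2_ge0; first exact: powR_ge0.
  exact: le_trans (powR_ge0 _ _) d_le.
by rewrite expr2 -powRM // b0_sqr powRM // ler_wpM2l ?powR_ge0.
Qed.

Lemma tridiag_psd_powR m (a b : nat -> R) : (forall i, (i < m)%N -> 0 <= b i) ->
  tridiag_psd m a b -> tridiag_psd m (fun i => a i `^ r) (fun i => b i `^ r).
Proof.
elim: m a b => [|m IH] a b b_ge0 psd x.
  by rewrite tridiag_form_head ?(mulr_ge0 (powR_ge0 _ _) (sqr_ge0 _)) // => -[].
have a0_ge0 := tridiag_psd_diag0 psd.
have schur_psd : tridiag_psd m (schur_diag a b) (fun i => b i.+1).
  by move=> y; rewrite -tridiag_form_schur.
have c_ge0 := tridiag_psd_diag0 schur_psd.
have a0_b0 : a 0%N = 0 -> b 0%N = 0.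
  (* otherwise the form is negative at (t, 1, 0, ..., 0) for t = -(a 1 + 1) / (2 b 0) *)
  move=> a00; apply/eqP/negPn/negP => b0_neq0.
  have := psd (scons (- (a 1%N + 1) / (2 * b 0%N)) (fun i => (i == 0%N)%:R)).
  rewrite tridiag_formS tridiag_form_delta0 /= a00 mul0r add0r mulr1.
  by rewrite [2 * _ * _]mulrC divfK ?mulf_neq0 //; lra.
have b0_ge0 : 0 <= b 0%N by apply: b_ge0.
apply: le_trans (tridiag_form_powR_schur m x a0_ge0 b0_ge0 a0_b0 c_ge0).
by apply: IH => // i lt_im; apply: b_ge0.
Qed.

Lemma tridiag_pd_powR m (a b : nat -> R) : (forall i, (i < m)%N -> 0 <= b i) ->
  tridiag_pd m a b -> tridiag_pd m (fun i => a i `^ r) (fun i => b i `^ r).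
Proof.
have head_gt0 (u y : nat -> R) :
    0 < u 0%N -> y 0%N != 0 -> 0 < u 0%N `^ r * y 0%N ^+ 2.
  by move=> u0_gt0 y0_neq0; rewrite mulr_gt0 ?powR_gt0 // exprn_even_gt0 ?y0_neq0.
elim: m a b => [|m IH] a b b_ge0 pd x [i le_im xi_neq0].
  move: le_im xi_neq0; rewrite leqn0 => /eqP-> x0_neq0.
  by rewrite tridiag_form_head ?head_gt0 ?(tridiag_pd_diag0 pd) // => -[].
have a0_gt0 := tridiag_pd_diag0 pd.
have schur_pd : tridiag_pd m (schur_diag a b) (fun i => b i.+1).
  by move=> y [j le_jm yj_neq0]; rewrite -tridiag_form_schur pd //; exists j.+1.
have c_gt0 := tridiag_pd_diag0 schur_pd.
have a0_b0 : a 0%N = 0 -> b 0%N = 0 by move=> a00; move: a0_gt0; rewrite a00 ltxx.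
have [[j le_jm xj_neq0]|x_eq0] := pselect (exists2 j, (j <= m)%N & x j.+1 != 0).
  have b0_ge0 : 0 <= b 0%N by apply: b_ge0.
  apply: lt_le_trans (tridiag_form_powR_schur m x (ltW a0_gt0) b0_ge0 a0_b0 (ltW c_gt0)).
  by apply: IH; [move=> k lt_km; apply: b_ge0 | | exists j].
rewrite tridiag_form_head; last first.
  by move=> [|k] //= le_km; apply: contra_notP x_eq0 => /eqP xk_neq0; exists k.
apply: head_gt0 => //; case: i le_im xi_neq0 => // k le_km xk_neq0.
by case: x_eq0; exists k.
Qed.

End HadamardPowerStep.

Lemma sum_band (R : comPzRingType) m (F : nat -> nat -> R) :
  (forall i j, (i.+1 < j)%N || (j.+1 < i)%N -> F i j = 0) ->
  \sum_(0 <= i < m.+1) \sum_(0 <= j < m.+1) F i j =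
  \sum_(0 <= i < m.+1) F i i + \sum_(0 <= i < m) (F i i.+1 + F i.+1 i).
Proof.
move=> F_band; elim: m => [|m IH]; first by rewrite !big_nat1 big_geq // addr0.
have far_sum0 (G : nat -> R) : (forall i, (i < m)%N -> G i = 0) -> \sum_(0 <= i < m) G i = 0.
  by move=> G0; rewrite big_nat_cond big1 // => i /andP[/andP[_ /G0]].
have col : \sum_(0 <= i < m.+1) F i m.+1 = F m m.+1.
  by rewrite big_nat_recr //= far_sum0 ?add0r // => i lt_im; rewrite F_band //; lia.
have row : \sum_(0 <= j < m.+2) F m.+1 j = F m.+1 m + F m.+1 m.+1.
  by rewrite !big_nat_recr //= far_sum0 ?add0r // => j lt_jm; rewrite F_band //; lia.
rewrite big_nat_recr //= (eq_bigr (fun i => \sum_(0 <= j < m.+1) F i j + F i m.+1)).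
  rewrite big_split /= IH col row [in RHS]big_nat_recr //.
  by rewrite (big_nat_recr m 0 (fun i => F i i.+1 + F i.+1 i)) //=; ring.
by move=> i _; rewrite big_nat_recr.
Qed.

Section TridiagonalMatrix.
Variable R : realType.
Implicit Types (a b : nat -> R) (m : nat).

Definition tridiag_entry a b (i j : nat) : R :=
  if i == j then a i else if i.+1 == j then b i else if j.+1 == i then b j else 0.

Definition tridiag_mx m a b : 'M[R]_m.+1 := \matrix_(i, j) tridiag_entry a b i j.

Lemma tridiag_entryC a b i j : tridiag_entry a b i j = tridiag_entry a b j i.
Proof.
rewrite /tridiag_entry eq_sym; case: eqP => [->|_] //.
by case: eqP => [eq1|_]; case: eqP => [eq2|_] //; lia.
Qed.

Lemma tridiag_entry_band a b i j :
  (i.+1 < j)%N || (j.+1 < i)%N -> tridiag_entry a b i j = 0.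
Proof.
by move=> far; rewrite /tridiag_entry; do 3 (case: eqP => [?|_]; first lia).
Qed.

Lemma qform_tridiag_mx m a b (x : 'rV[R]_m.+1) :
  qform (tridiag_mx m a b) x = tridiag_form m a b (fun i => x 0 (inord i)).
Proof.
set X := fun i => x 0 (inord i).
have -> : qform (tridiag_mx m a b) x =
    \sum_(0 <= i < m.+1) \sum_(0 <= j < m.+1) X j * tridiag_entry a b j i * X i.
  rewrite /qform !mxE big_mkord; apply: eq_bigr => i _.
  rewrite !mxE big_distrl big_mkord; apply: eq_bigr => j _.
  by rewrite !mxE /X !inord_val.
rewrite (@sum_band _ m (fun i j => X j * tridiag_entry a b j i * X i)) => [|i j far]; last first.
  by rewrite tridiag_entry_band ?mulr0 ?mul0r // orbC.
rewrite /tridiag_form; congr (_ + _).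
  by apply: eq_bigr => i _; rewrite /tridiag_entry eqxx mulrAC -expr2 mulrC.
rewrite mulr_sumr; apply: eq_bigr => i _.
by rewrite tridiag_entryC /tridiag_entry (ltn_eqF (ltnSn i)) eqxx; ring.
Qed.

Lemma qform_tridiag_mx_row m a b (y : nat -> R) :
  qform (tridiag_mx m a b) (\row_(j < m.+1) y j) = tridiag_form m a b y.
Proof.
by rewrite qform_tridiag_mx; apply: eq_tridiag_form => i le_im; rewrite mxE inordK.
Qed.

Lemma tridiag_mx_tr m a b : (tridiag_mx m a b)^T = tridiag_mx m a b.
Proof. by apply/matrixP => i j; rewrite !mxE tridiag_entryC. Qed.

Lemma possemidef_tridiag_mx m a b : possemidef (tridiag_mx m a b) <-> tridiag_psd m a b.
Proof.
split=> [[_ psd] y | psd]; first by rewrite -qform_tridiag_mx_row.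
by split=> [|x]; rewrite ?tridiag_mx_tr ?qform_tridiag_mx.
Qed.

Lemma posdef_tridiag_mx m a b : posdef (tridiag_mx m a b) <-> tridiag_pd m a b.
Proof.
split=> [[_ pd] y [i le_im yi_neq0] | pd].
  rewrite -qform_tridiag_mx_row; apply: pd; apply: contraNneq yi_neq0 => /rowP.
  by move/(_ (inord i))/eqP; rewrite !mxE inordK.
split=> [|x /rV0Pn[j xj_neq0]]; first exact: tridiag_mx_tr.
by rewrite qform_tridiag_mx; apply: pd; exists j; rewrite ?inord_val // -ltnS.
Qed.

Lemma nonneg_tridiag_mx m a b :
  (forall i, 0 <= a i) -> (forall i, 0 <= b i) -> nonneg_tridiag (tridiag_mx m a b).
Proof.
move=> a_ge0 b_ge0; split=> [i j|]; first by rewrite !mxE tridiag_entryC.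
split=> [i|]; first by rewrite mxE /tridiag_entry eqxx.
split=> [i j _|i j far]; last by rewrite mxE tridiag_entry_band //; apply/orP.
by rewrite mxE /tridiag_entry; do 3 case: ifP => _ //.
Qed.

Lemma tridiag_mxE m (T : 'M[R]_m.+1) :
  (forall i j, T i j = T j i) ->
  (forall i j : 'I_m.+1, (i.+1 < j)%N \/ (j.+1 < i)%N -> T i j = 0) ->
  T = tridiag_mx m (fun i => T (inord i) (inord i)) (fun i => T (inord i) (inord i.+1)).
Proof.
move=> T_sym T_band; apply/matrixP => i j; rewrite mxE /tridiag_entry.
case: eqP => [/val_inj->|ne_ij]; first by rewrite inord_val.
case: eqP => [eq_ij|ne_ij1]; first by rewrite eq_ij !inord_val.
case: eqP => [eq_ji|ne_ji1]; first by rewrite eq_ji !inord_val T_sym.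
by apply: T_band; lia.
Qed.

Lemma hadamard_pow_tridiag_mx m a b (r : R) : 0 < r ->
  hadamard_pow r (tridiag_mx m a b) = tridiag_mx m (fun i => a i `^ r) (fun i => b i `^ r).
Proof.
move=> r_gt0; apply/matrixP => i j; rewrite !mxE /tridiag_entry.
by do 3 case: ifP => _ //; rewrite powR0 // gt_eqF.
Qed.

End TridiagonalMatrix.

Section PathCounterexample.
Variable R : realFieldType.
Implicit Types (a b x : nat -> R) (g : R) (m : nat).

Lemma path3_form_lb g (x0 x1 x2 : R) :
  (1 - 2 * g ^+ 2) / 2 * (x0 ^+ 2 + x1 ^+ 2 + x2 ^+ 2)
  <= x0 ^+ 2 + x1 ^+ 2 + x2 ^+ 2 + 2 * g * (x0 * x1 + x1 * x2).
Proof.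
set c := (1 + 2 * g ^+ 2) / 2.
have c_gt0 : 0 < c by rewrite divr_gt0 // ltr_pwDl // mulr_ge0 ?sqr_ge0.
rewrite -subr_ge0 -(pmulr_rge0 _ c_gt0).
have -> : c * (x0 ^+ 2 + x1 ^+ 2 + x2 ^+ 2 + 2 * g * (x0 * x1 + x1 * x2)
                - (1 - 2 * g ^+ 2) / 2 * (x0 ^+ 2 + x1 ^+ 2 + x2 ^+ 2)) =
  (c * x1 + g * (x0 + x2)) ^+ 2 + ((1 - 2 * g ^+ 2) / 2) ^+ 2 * (x0 ^+ 2 + x2 ^+ 2)
  + g ^+ 2 * (x0 - x2) ^+ 2 by rewrite /c; field.
rewrite !addr_ge0 //; first exact: sqr_ge0.
  by apply: mulr_ge0; [exact: sqr_ge0 | apply: addr_ge0; exact: sqr_ge0].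
by apply: mulr_ge0; exact: sqr_ge0.
Qed.

(* The leading 3 x 3 block of this form has eigenvalues 1 and 1 +- g sqrt 2. *)
Lemma tridiag_form_path3 m a b x g :
  (forall i, a i = 1) -> (forall i, b i = if (i < 2)%N then g else 0) ->
  tridiag_form m.+2 a b x =
  \sum_(0 <= i < m.+3) x i ^+ 2 + 2 * g * (x 0%N * x 1%N + x 1%N * x 2%N).
Proof.
move=> a1 bE; rewrite /tridiag_form; under eq_bigr do rewrite a1 mul1r.
congr (_ + _); rewrite !big_nat_recl // big1 => [|i _]; last by rewrite bE !mul0r.
by rewrite !bE /=; ring.
Qed.

Lemma tridiag_pd_path3 m a b g :
  (forall i, a i = 1) -> (forall i, b i = if (i < 2)%N then g else 0) ->
  2 * g ^+ 2 < 1 -> tridiag_pd m.+2 a b.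
Proof.
move=> a1 bE g_small x [i le_i xi_neq0]; rewrite (tridiag_form_path3 _ _ a1 bE).
have sum_gt0 : 0 < \sum_(0 <= k < m.+3) x k ^+ 2.
  rewrite lt_def psumr_eq0 => [|k _]; last exact: sqr_ge0.
  rewrite sumr_ge0 => [|k _]; last exact: sqr_ge0.
  rewrite andbT; apply/allPn; exists i; first by rewrite mem_index_iota.
  by rewrite sqrf_eq0.
move: sum_gt0; rewrite !big_nat_recl //.
have tail_ge0 : 0 <= \sum_(0 <= k < m) x k.+3 ^+ 2.
  by apply: sumr_ge0 => k _; exact: sqr_ge0.
have := path3_form_lb g (x 0%N) (x 1%N) (x 2%N).
have e_gt0 : 0 < (1 - 2 * g ^+ 2) / 2 by rewrite divr_gt0 // subr_gt0.
have e_le1 : (1 - 2 * g ^+ 2) / 2 <= 1 by rewrite ler_pdivrMr // mul1r; nra.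
nra.
Qed.

Lemma not_tridiag_psd_path3 m a b g :
  (forall i, a i = 1) -> (forall i, b i = if (i < 2)%N then g else 0) ->
  1 < 2 * g ^+ 2 -> ~ tridiag_psd m.+2 a b.
Proof.
move=> a1 bE g_large psd.
have := psd (fun i => if i == 1%N then -1 else if (i < 3)%N then g else 0).
rewrite (tridiag_form_path3 _ _ a1 bE) !big_nat_recl // big1 => [|i _] //=.
  by lra.
by rewrite expr2 mul0r.
Qed.

End PathCounterexample.

(* g = 2^(-1/(1+r)): then 2 g^2 = 2^((r-1)/(r+1)) and 2 g^(2r) = 2^((1-r)/(1+r)). *)
Lemma path3_parameter (R : realType) (r : R) : 0 < r -> r < 1 ->
  exists g, [/\ 0 <= g, 2 * g ^+ 2 < 1 & 1 < 2 * (g `^ r) ^+ 2].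
Proof.
move=> r_gt0 r_lt1; set L := ln (2 : R); set c := L / (1 + r).
have L_gt0 : 0 < L by rewrite ln_gt0 // ltr1n.
have c_gt0 : 0 < c by rewrite divr_gt0 // addr_gt0.
have cE : c * (1 + r) = L by rewrite divfK // gt_eqF // addr_gt0.
have two_expR y : 2 * expR y ^+ 2 = expR (L + 2 * y).
  by rewrite expRD lnK ?posrE // -expRM_natl.
exists (expR (- c)); split; first exact: expR_ge0.
  by rewrite two_expR expR_lt1; nra.
by rewrite -expRM two_expR expR_gt1; nra.
Qed.

Lemma posdef_possemidef (R : realType) n (A : 'M[R]_n) : posdef A -> possemidef A.
Proof.
move=> [A_sym A_pd]; split=> // x; have [->|x_neq0] := eqVneq x 0.
  by rewrite /qform !mul0mx mxE.
exact: ltW (A_pd x x_neq0).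
Qed.

Section Sufficiency.
Variables (R : realType) (r : R) (m : nat) (T : 'M[R]_m.+1).
Hypotheses (r_ge1 : 1 <= r) (T_tri : nonneg_tridiag T).

Let a := fun i => T (inord i) (inord i).
Let b := fun i => T (inord i) (inord i.+1).

Let super_ge0 i : (i < m)%N -> 0 <= b i.
Proof.
by case: T_tri => _ [_ [T_super _]] lt_im; apply: T_super; rewrite !inordK // ltnW.
Qed.

Let tridiagE : T = tridiag_mx m a b.
Proof. by case: T_tri => T_sym [_ [_ T_band]]; exact: tridiag_mxE. Qed.

Let r_gt0 : 0 < r. Proof. exact: lt_le_trans ltr01 r_ge1. Qed.

Lemma possemidef_hadamard_pow : possemidef T -> possemidef (hadamard_pow r T).
Proof.
rewrite tridiagE hadamard_pow_tridiag_mx // !possemidef_tridiag_mx.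
exact: tridiag_psd_powR.
Qed.

Lemma posdef_hadamard_pow : posdef T -> posdef (hadamard_pow r T).
Proof.
rewrite tridiagE hadamard_pow_tridiag_mx // !posdef_tridiag_mx.
exact: tridiag_pd_powR.
Qed.

End Sufficiency.

Lemma hadamard_pow_counterexample (R : realType) (m : nat) (r : R) :
  0 < r -> r < 1 ->
  exists T : 'M[R]_m.+3,
    [/\ nonneg_tridiag T, posdef T & ~ possemidef (hadamard_pow r T)].
Proof.
move=> r_gt0 r_lt1.
have [g [g_ge0 g_small g_large]] := path3_parameter r_gt0 r_lt1.
set b := fun i => if (i < 2)%N then g else 0.
exists (tridiag_mx m.+2 (fun=> 1) b); split.
- by apply: nonneg_tridiag_mx => // i; rewrite /b; case: ifP.
- exact/posdef_tridiag_mx/(tridiag_pd_path3 _ _ g_small).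
rewrite hadamard_pow_tridiag_mx // possemidef_tridiag_mx.
apply: (not_tridiag_psd_path3 _ _ g_large) => i; first by rewrite powR1.
by rewrite /b; case: ifP => // _; rewrite powR0 // gt_eqF.
Qed.

Theorem theorem1p2 (R : realType) (n : nat) (r : R) :
  (3 <= n)%N -> 0 < r ->
  ((forall T : 'M[R]_n, nonneg_tridiag T -> posdef T -> posdef (hadamard_pow r T))
     <-> 1 <= r) /\
  ((forall T : 'M[R]_n, nonneg_tridiag T -> possemidef T ->
       possemidef (hadamard_pow r T))
     <-> 1 <= r).
Proof.
case: n => [|[|[|m]]] // _ r_gt0; have [r_ge1|r_lt1] := lerP 1 r.
  split; split=> // _ T T_tri; first exact: posdef_hadamard_pow.
  exact: possemidef_hadamard_pow.
have [T [T_tri T_pd not_psd]] := hadamard_pow_counterexample m r_gt0 r_lt1.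
split; split=> [pd_pres | ]; rewrite ?leNgt ?r_lt1 //; case: not_psd.
  exact/posdef_possemidef/pd_pres.
exact: pd_pres _ T_tri (posdef_possemidef T_pd).
Qed.
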